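(* Fix a positive integer $q$ and $\epsilon\in(0,1)$. Let $P_n$ be a random many-to-one school choice problem with $n$ schools of quota $q$ and $nq$ students, and let $I_0\subseteq I$, $S_1\subseteq S$ be fixed subsets with $|I_0|\ge\epsilon nq$ and $|S_1|\ge\epsilon n$. The probability of the event that the students in $I_0$ together make at least $n\sqrt{\log n}$ applications during DA and no student in $I_0$ ever applies to a school in $S_1$ is at most $(1-\epsilon)^{n\sqrt{\log n}}$.
   Context: A random many-to-one school choice problem $P_n$ with quota $q$: a set $S$ of $n$ schools, each with quota $q$, and a set $I$ of $nq$ students; each student's strict preference over $S$ and each school's strict priority over $I$ are uniformly random linear orders, all mutually independent. Student-proposing deferred acceptance (DA): in each round every student not tentatively held applies to her most preferred school that has not yet rejected her; each school tentatively holds its $q$ highest-priority applicants and rejects the rest; stop when a round has no new rejection. Student $i$ applies to school $s$ if at some round she proposes to $s$; the number of applications a student makes is the number of schools she applies to. *)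

From HB Require Import structures.
From mathcomp Require Import all_boot all_order all_algebra all_fingroup.
From mathcomp Require Import all_classical all_reals all_analysis.
Set Implicit Arguments. Unset Strict Implicit. Unset Printing Implicit Defensive.
Import Order.TTheory GRing.Theory Num.Theory.

(* Students are 'I_(n*q), schools are 'I_n.
   A profile P = (pref, prio):
   - pref i : {perm 'I_n}, pref i s = rank of school s in student i's
     preference (0 = most preferred);  a strict linear order on schools.
   - prio s : {perm 'I_(n*q)}, prio s j = rank of student j in school s's
     priority (0 = highest priority); a strict linear order on students.
   The uniform distribution on profiles is the uniform distribution on this
   finite type (all orders uniform and mutually independent). *)
Definition profile (n q : nat) : finType :=
  ({ffun 'I_(n * q) -> {perm 'I_n}} * {ffun 'I_n -> {perm 'I_(n * q)}})%type.

(* DA state: r j = number of schools that have rejected student j so far.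
   Student j currently applies to (or is held by) the school s with
   pref j s = r j (if r j < n). *)
Definition da_rejected (n q : nat) (P : profile n q)
    (r : {ffun 'I_(n * q) -> nat}) (j : 'I_(n * q)) : bool :=
  [exists s : 'I_n,
     ((P.1 j s : nat) == r j) &&
     (q <= #|[set j' : 'I_(n * q) |
               ((P.1 j' s : nat) == r j') && (P.2 s j' < P.2 s j)%N]|)].

(* One round: each school holds its q highest-priority current applicants
   and rejects the others. *)
Definition da_step (n q : nat) (P : profile n q)
    (r : {ffun 'I_(n * q) -> nat}) : {ffun 'I_(n * q) -> nat} :=
  [ffun j => if da_rejected P r j then (r j).+1 else r j].

(* Final rejection counts.  Every round with a new rejection increases
   sum_j r j, and r j <= n, so after n*(n*q)+1 rounds the state is a fixed
   point, i.e. the algorithm has stopped. *)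
Definition da_rejections (n q : nat) (P : profile n q) : {ffun 'I_(n * q) -> nat} :=
  iter (n * (n * q)).+1 (da_step P) [ffun _ => 0%N].

Definition da_applies (n q : nat) (P : profile n q) (i : 'I_(n * q)) (s : 'I_n) : bool :=
  (P.1 i s <= da_rejections P i)%N.

Definition da_num_applications (n q : nat) (P : profile n q) (i : 'I_(n * q)) : nat :=
  #|[set s : 'I_n | da_applies P i s]|.

Definition prob (R : realType) (n q : nat) (E : pred (profile n q)) : R :=
  (#|[set P : profile n q | E P]|%:R / #|[set: profile n q]|%:R)%R.

From HB Require Import structures.
From mathcomp Require Import all_boot all_order all_algebra all_fingroup.
From mathcomp Require Import all_classical all_reals all_analysis.
From mathcomp Require Import lra.
Import Order.TTheory GRing.Theory Num.Theory.
Set Implicit Arguments. Unset Strict Implicit. Unset Printing Implicit Defensive.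

(* Principle of deferred decisions.  DA reads a student's preference list
   only up to the school she currently proposes to, so preference entries can
   be revealed one at a time.  With p = 1 - |S1|/n, consider the potential
     Z = [no revealed entry of a student of I0 lies in S1] * p ^ (M - r),
   r the number of entries revealed for students of I0.  Given everything
   revealed so far, the next entry of a student is uniformly distributed over
   the schools not yet seen, so it lies in S1 with probability at least
   |S1|/n, and revealing it does not increase the expected potential.  At the
   start E[Z] = p^M, while on the event of the theorem (with M applications)
   Z = 1 when DA stops; hence the event has probability at most p^M. *)

Section Locality.
Variables n q : nat.
Local Notation N := (n * q).
Local Notation prof := (profile n q).

Definition agree_below (a : {ffun 'I_N -> nat}) (P P' : prof) : Prop :=
  P.2 = P'.2 /\
  forall j s, ((P.1 j s < a j) || (P'.1 j s < a j))%N -> P.1 j s = P'.1 j s.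

Lemma agree_below_le (a b : {ffun 'I_N -> nat}) (P P' : prof) :
  (forall j, a j <= b j)%N -> agree_below b P P' -> agree_below a P P'.
Proof.
move=> le_ab [e2 e1]; split=> // j s lt_a; apply: e1.
by case/orP: lt_a => lt_a; apply/orP; [left|right]; exact: leq_trans lt_a (le_ab j).
Qed.

(* In DA state [r] student [j] has read the first [(r j).+1] entries of her
   list: the schools that rejected her and the one she now proposes to. *)
Definition da_revealed (r : {ffun 'I_N -> nat}) : {ffun 'I_N -> nat} :=
  [ffun j => (r j).+1].

Definition da_state (t : nat) (P : prof) : {ffun 'I_N -> nat} :=
  iter t (da_step P) [ffun=> 0%N].

Lemma agree_rank_eq r (P P' : prof) j s :
  agree_below (da_revealed r) P P' ->
  ((P.1 j s : nat) == r j) = ((P'.1 j s : nat) == r j).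
Proof.
case=> _ e1; apply/eqP/eqP => e.
  by rewrite -(e1 j s) // ffunE e ltnSn.
by rewrite (e1 j s) // ffunE e ltnSn orbT.
Qed.

Lemma da_rejected_agree r (P P' : prof) j :
  agree_below (da_revealed r) P P' -> da_rejected P r j = da_rejected P' r j.
Proof.
move=> agr; have [e2 _] := agr.
apply: eq_existsb => s; rewrite (agree_rank_eq j s agr) e2.
congr (_ && (_ <= _)%N); apply: eq_card => j'.
by rewrite !inE (agree_rank_eq j' s agr).
Qed.

Lemma da_state_agree t (P P' : prof) :
  agree_below (da_revealed (da_state t P)) P P' -> da_state t P' = da_state t P.
Proof.
elim: t => [//|t IHt] agr.
have agr_t : agree_below (da_revealed (da_state t P)) P P'.
  by apply: agree_below_le agr => j; rewrite !ffunE ltnS; case: ifP.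
rewrite /da_state !iterS -/(da_state t P) -/(da_state t P') IHt //.
by apply/ffunP => j; rewrite !ffunE (da_rejected_agree j agr_t).
Qed.

Lemma da_revealedS t (P : prof) j :
  da_revealed (da_state t.+1 P) j =
  (da_revealed (da_state t P) j + da_rejected P (da_state t P) j)%N.
Proof. by rewrite !ffunE; case: da_rejected; rewrite ?addn1 ?addn0. Qed.

Lemma da_num_applications_le (P : prof) (i : 'I_N) :
  (da_num_applications P i <= (da_rejections P i).+1)%N.
Proof.
rewrite /da_num_applications.
have -> : [set s | da_applies P i s] =
          P.1 i @^-1: [set o : 'I_n | (o <= da_rejections P i)%N].
  by apply/setP => s; rewrite !inE.
rewrite card_preimset; last exact: perm_inj.
rewrite cardE -(size_map val) -(size_iota 0 (da_rejections P i).+1).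
apply: uniq_leq_size; first by rewrite (map_inj_uniq val_inj) enum_uniq.
move=> _ /mapP[s s_le ->]; move: s_le.
by rewrite mem_enum inE mem_iota ltnS.
Qed.

End Locality.

Local Open Scope ring_scope.

Lemma ler_psum_sub (R : numDomainType) (I : finType) (P Q : pred I) (F : I -> R) :
  (forall i, P i -> Q i) -> (forall i, 0 <= F i) ->
  \sum_(i | P i) F i <= \sum_(i | Q i) F i.
Proof.
move=> sPQ F_ge0; rewrite [leLHS]big_mkcond [leRHS]big_mkcond.
apply: ler_sum => i _; case: ifP => [/sPQ -> //|_]; by case: ifP.
Qed.

Lemma mulr_expr_subS_le (R : numDomainType) (p : R) (M c : nat) :
  0 <= p -> p <= 1 -> p * p ^+ (M - c.+1) <= p ^+ (M - c).
Proof.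
move=> p_ge0 p_le1; case: (leqP M c) => [le_Mc | lt_cM].
  have -> : (M - c.+1 = 0)%N by apply/eqP; rewrite subn_eq0 ltnW // ltnS.
  by rewrite (eqP (_ : M - c == 0)%N) ?subn_eq0 // !expr0 mulr1.
by rewrite -exprS subnSK.
Qed.

Section Potential.
Variables (R : realFieldType) (n q : nat).
Local Notation N := (n * q).
Local Notation prof := (profile n q).
Variables (I0 : {set 'I_N}) (S1 : {set 'I_n}) (M : nat) (p : R).

Definition avoids (P : prof) (a : {ffun 'I_N -> nat}) : bool :=
  [forall i in I0, forall s in S1, a i <= P.1 i s]%N.

Definition nrevealed (a : {ffun 'I_N -> nat}) : nat := (\sum_(i in I0) a i)%N.

Definition potential (P : prof) (a : {ffun 'I_N -> nat}) : R :=
  (avoids P a)%:R * p ^+ (M - nrevealed a).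

Lemma avoids_agree a (P P' : prof) : agree_below a P P' -> avoids P a = avoids P' a.
Proof.
case=> _ e1; apply: eq_forallb => i; congr (_ ==> _).
apply: eq_forallb => s; congr (_ ==> _).
case: (ltnP (P.1 i s) (a i)) => lt1; case: (ltnP (P'.1 i s) (a i)) => lt2 //.
  by move: lt2; rewrite -e1 ?lt1 // leqNgt lt1.
by move: lt1; rewrite e1 ?lt2 ?orbT // leqNgt lt2.
Qed.

Lemma potential_ge0 P a : 0 <= p -> 0 <= potential P a.
Proof. by move=> p_ge0; rewrite mulr_ge0 ?ler0n ?exprn_ge0. Qed.

Lemma potential_zero P : potential P [ffun=> 0%N] = p ^+ M.
Proof.
rewrite /potential /nrevealed big1 => [|i _]; last by rewrite ffunE.
by rewrite subn0 (_ : avoids _ _ = true) ?mul1r //; apply/'forall_implyP => i _;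
  apply/'forall_implyP => s _; rewrite ffunE.
Qed.

Lemma potential_da_rejections_ge1 (P : prof) :
  (M <= \sum_(i in I0) da_num_applications P i)%N ->
  [forall i in I0, forall s in S1, ~~ da_applies P i s] ->
  1 <= potential P (da_revealed (da_rejections P)).
Proof.
move=> many av; rewrite /potential (_ : avoids _ _ = true) ?mul1r; last first.
  apply/forall_inP => i i_in; apply/forall_inP => s s_in.
  by move/forall_inP/(_ i i_in)/forall_inP/(_ s s_in): av; rewrite ffunE ltnNge.
rewrite (_ : M - _ = 0)%N ?expr0 //; apply/eqP; rewrite subn_eq0 (leq_trans many) //.
by apply: leq_sum => i _; rewrite ffunE da_num_applications_le.
Qed.

Hypotheses (p_ge0 : 0 <= p) (p_le1 : p <= 1) (n_gt0 : 0 < n%:R :> R)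
  (pn : p * n%:R = n%:R - #|S1|%:R).

(* [A] and [C] only depend on the information revealed by [A] itself:
   they are "stopping rules" for the revelation process. *)
Definition adapted (A : prof -> {ffun 'I_N -> nat}) (C : prof -> bool) :=
  forall P P', agree_below (A P) P P' -> A P' = A P /\ C P' = C P.

Section RevealStep.
Variables (x0 : 'I_n) (k : 'I_N).
Variables (A : prof -> {ffun 'I_N -> nat}) (C : prof -> bool).
Hypothesis A_adapted : adapted A C.

Variable A' : prof -> {ffun 'I_N -> nat}.
Hypothesis A'_next : forall P j, A' P j = (A P j + ((j == k) && C P))%N.

(* The school [k] ranks at [A P k]; the default [x0] is only used when
   [A P k >= n], which cannot happen on [active] profiles if [S1] is
   nonempty. *)
Definition next_school (P : prof) : 'I_n := (P.1 k)^-1%g (insubd x0 (A P k)).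

Definition swap_next (P : prof) (y : 'I_n) : prof :=
  ([ffun j => if j == k then (tperm (next_school P) y * P.1 k)%g else P.1 j], P.2).

Definition active := [set P : prof | C P && avoids P (A P)].

Lemma swap_next_inj P P' y :
  swap_next P y = swap_next P' y -> next_school P = next_school P' -> P = P'.
Proof.
case: P P' => [f g] [f' g'] [ef eg] en; rewrite eg; congr pair.
apply/ffunP => j; move/ffunP/(_ j): ef; rewrite !ffunE.
by case: eqP => [-> | _ //]; rewrite en => /mulgI.
Qed.

Section Student_in_I0.
Hypothesis k_in : k \in I0.

Lemma active_rank_le P y : P \in active -> y \in S1 -> (A P k <= P.1 k y)%N.
Proof.
rewrite inE => /andP[_ /forallP/(_ k)]; rewrite k_in => /forallP/(_ y) av_k y_in.
by move: av_k; rewrite y_in.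
Qed.

Lemma next_school_rank P y :
  P \in active -> y \in S1 -> P.1 k (next_school P) = A P k :> nat.
Proof.
move=> P_act y_in; rewrite /next_school permKV val_insubd.
by rewrite (leq_ltn_trans (active_rank_le P_act y_in)).
Qed.

Lemma swap_next_agree P y :
  P \in active -> y \in S1 -> agree_below (A P) P (swap_next P y).
Proof.
move=> P_act y_in; have le_y := active_rank_le P_act y_in.
have rk := next_school_rank P_act y_in.
split=> // j s; rewrite ffunE; case: eqP => [->|_] //; rewrite permM.
have [->|ne_s] := eqVneq s (next_school P).
  by rewrite tpermL rk ltnn /= ltnNge le_y.
have [->|ne_y] := eqVneq s y.
  by rewrite tpermR rk ltnn orbF ltnNge le_y.
by rewrite tpermD 1?eq_sym.
Qed.

Lemma A_swap_next P y : P \in active -> y \in S1 -> A (swap_next P y) = A P.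
Proof. by move=> P_act y_in; case: (A_adapted (swap_next_agree P_act y_in)). Qed.

Lemma swap_next_active P y :
  P \in active -> y \in S1 -> swap_next P y \in active.
Proof.
move=> P_act y_in; have agr := swap_next_agree P_act y_in.
have [eA eC] := A_adapted agr.
by move: P_act; rewrite !inE eA eC -(avoids_agree agr).
Qed.

Lemma next_school_swap P y :
  P \in active -> y \in S1 -> next_school (swap_next P y) = y.
Proof.
move=> P_act y_in; rewrite {1}/next_school (A_swap_next P_act y_in) /= ffunE eqxx.
apply: (@perm_inj _ (tperm (next_school P) y * P.1 k)%g).
by rewrite permKV permM tpermR /next_school permKV.
Qed.

(* Swapping the next school with any [y] of [S1] is an injection of
   [active * S1] into the active profiles whose next school is in [S1]
   (recording the old next school), and it preserves [A]. *)
Lemma deferred_decision (f : {ffun 'I_N -> nat} -> R) : (forall a, 0 <= f a) ->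
  #|S1|%:R * \sum_(P in active) f (A P) <=
    n%:R * \sum_(P in active | next_school P \in S1) f (A P).
Proof.
move=> f_ge0; pose D := finset.setX active S1.
pose swap (u : prof * 'I_n) := (swap_next u.1 u.2, next_school u.1).
have -> : #|S1|%:R * \sum_(P in active) f (A P) = \sum_(u in D) f (A u.1).
  rewrite mulr_sumr (eq_bigr (fun P => \sum_(y in S1) f (A P))); last first.
    by move=> P _; rewrite sumr_const mulr_natl.
  by rewrite pair_big_dep; apply: eq_big => [[P y]|//]; rewrite finset.in_setX.
have -> : \sum_(u in D) f (A u.1) = \sum_(v in swap @: D) f (A v.1).
  rewrite big_imset /=; last first.
    move=> [P y] [P' y']; rewrite !finset.in_setX.
    move=> /andP[P_act y_in] /andP[P'_act y'_in].
    move=> e; have en : next_school P = next_school P' := congr1 snd e.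
    have {}e : swap_next P y = swap_next P' y' := congr1 fst e.
    have ey : y = y'.
      by rewrite -(next_school_swap P_act y_in) e next_school_swap.
    by rewrite -ey in e *; rewrite (swap_next_inj e en).
  apply: eq_bigr => -[P y]; rewrite finset.in_setX => /andP[P_act y_in].
  by rewrite A_swap_next.
rewrite mulr_sumr (eq_bigr (fun P => \sum_(x : 'I_n) f (A P))); last first.
  by move=> P _; rewrite sumr_const card_ord mulr_natl.
rewrite pair_big_dep /=; apply: ler_psum_sub => // v /imsetP[[P y]].
rewrite finset.in_setX => /andP[P_act y_in] ->.
by rewrite /= next_school_swap // swap_next_active // y_in.
Qed.

Lemma next_school_outside P :
  C P -> avoids P (A' P) -> P \in active /\ next_school P \notin S1.
Proof.
move=> CP av; have P_act : P \in active.
  rewrite inE CP; apply/forallP => i; apply/implyP => i_in.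
  apply/forallP => s; apply/implyP => s_in.
  move/forallP/(_ i): av; rewrite i_in => /forallP/(_ s); rewrite s_in A'_next.
  exact: leq_trans (leq_addr _ _).
split=> //; apply/negP => next_in.
move/forallP/(_ k): av; rewrite k_in => /forallP/(_ (next_school P)).
by rewrite next_in (next_school_rank P_act next_in) A'_next eqxx CP addn1 ltnn.
Qed.

Lemma nrevealed_next P : C P -> nrevealed (A' P) = (nrevealed (A P)).+1.
Proof.
move=> CP; rewrite /nrevealed !(bigD1 k k_in) /= A'_next eqxx CP addn1 addSn.
congr (_ + _).+1; apply: eq_bigr => i /andP[_ /negbTE ne_ik].
by rewrite A'_next ne_ik addn0.
Qed.

Lemma potential_reveal_next_in :
  \sum_(P : prof) potential P (A' P) <= \sum_(P : prof) potential P (A P).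
Proof.
pose W P := p ^+ (M - (nrevealed (A P)).+1).
rewrite (bigID C) [leRHS](bigID C) /= lerD //; last first.
  apply: ler_sum => P /negbTE CP; rewrite (_ : A' P = A P) //.
  by apply/ffunP => j; rewrite A'_next CP andbF addn0.
have killed : \sum_(P | C P) potential P (A' P) <=
              \sum_(P in active | next_school P \notin S1) W P.
  rewrite (bigID (fun P => avoids P (A' P))) /= [X in _ + X]big1; last first.
    by move=> P /andP[_ /negbTE av]; rewrite /potential av mul0r.
  rewrite addr0 (eq_bigr W) => [|P /andP[CP av]]; last first.
    by rewrite /potential av nrevealed_next // mul1r.
  apply: ler_psum_sub => [P /andP[CP av]|P]; last exact: exprn_ge0.
  exact/andP/next_school_outside.
have outside : \sum_(P in active | next_school P \notin S1) W P <=
               p * \sum_(P in active) W P.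
  have dd : #|S1|%:R * \sum_(P in active) W P <=
            n%:R * \sum_(P in active | next_school P \in S1) W P.
    exact: (@deferred_decision (fun a => p ^+ (M - (nrevealed a).+1))
                                 (fun a => exprn_ge0 _ p_ge0)).
  rewrite -(ler_pM2l n_gt0) mulrA [_ * p]mulrC pn.
  move: dd; rewrite (bigID (fun P => next_school P \in S1) (mem active)) /=; lra.
have stays : p * \sum_(P in active) W P <= \sum_(P | C P) potential P (A P).
  rewrite mulr_sumr [leRHS](bigID (mem active)) /= -[leLHS]addr0 lerD //.
  - rewrite [leRHS](eq_bigl (mem active)) => [|P]; last first.
      by rewrite andb_idl // inE => /andP[].
    apply: ler_sum => P; rewrite inE => /andP[_ av].
    by rewrite /potential av mul1r mulr_expr_subS_le.
  - by apply: sumr_ge0 => P _; apply: potential_ge0.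
exact: le_trans killed (le_trans outside stays).
Qed.

End Student_in_I0.

Lemma potential_reveal_next :
  \sum_(P : prof) potential P (A' P) <= \sum_(P : prof) potential P (A P).
Proof.
have [k_in | k_out] := boolP (k \in I0); first exact: potential_reveal_next_in.
apply: ler_sum => P _.
have eA i : i \in I0 -> A' P i = A P i.
  move=> i_in; rewrite A'_next; case: eqP => [ei|_]; last by rewrite addn0.
  by move: k_out; rewrite -ei i_in.
rewrite /potential /nrevealed (eq_bigr _ eA) (_ : avoids _ _ = avoids P (A P)) //.
by apply: eq_forallb_in => i /eA ->.
Qed.

End RevealStep.

Section RevealAll.
Variables (x0 : 'I_n) (a : prof -> {ffun 'I_N -> nat}) (c : prof -> 'I_N -> bool).
Hypothesis a_adapted :
  forall P P', agree_below (a P) P P' -> a P' = a P /\ c P' =1 c P.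

Definition reveal_upto (m : nat) (P : prof) : {ffun 'I_N -> nat} :=
  [ffun j => (a P j + ((j < m)%N && c P j))%N].

Lemma reveal_upto_adapted m (lt_mN : (m < N)%N) :
  adapted (reveal_upto m) (fun P => c P (Ordinal lt_mN)).
Proof.
move=> P P' agr; have agr_a : agree_below (a P) P P'.
  by apply: agree_below_le agr => j; rewrite ffunE leq_addr.
have [ea ec] := a_adapted agr_a.
by split; [apply/ffunP => j; rewrite !ffunE ea ec | rewrite ec].
Qed.

Lemma potential_reveal_all (a' : prof -> {ffun 'I_N -> nat}) :
  (forall P j, a' P j = a P j + c P j)%N ->
  \sum_(P : prof) potential P (a' P) <= \sum_(P : prof) potential P (a P).
Proof.
move=> a'E; have reveal_all P : a' P = reveal_upto N P.
  by apply/ffunP => j; rewrite a'E !ffunE ltn_ord.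
have reveal_none P : a P = reveal_upto 0 P.
  by apply/ffunP => j; rewrite !ffunE addn0.
rewrite (eq_bigr _ (fun P _ => congr1 _ (reveal_all P))).
rewrite [leRHS](eq_bigr _ (fun P _ => congr1 _ (reveal_none P))).
elim: N => [//|m IHm]; apply: le_trans IHm.
have [lt_mN | le_Nm] := ltnP m N; last first.
  apply: ler_sum => P _; rewrite (_ : reveal_upto m.+1 P = reveal_upto m P) //.
  apply/ffunP => j; have lt_jm := leq_trans (ltn_ord j) le_Nm.
  by rewrite !ffunE lt_jm ltnS ltnW.
apply: (@potential_reveal_next x0 (Ordinal lt_mN) _ _ (reveal_upto_adapted lt_mN)).
move=> P j; rewrite !ffunE -addnA; congr (_ + _)%N.
have [-> | ne_jm] := eqVneq j (Ordinal lt_mN); first by rewrite /= ltnn ltnSn.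
rewrite addn0 ltnS leq_eqVlt -[nat_of_ord j == m]/(j == Ordinal lt_mN).
by rewrite (negbTE ne_jm).
Qed.

End RevealAll.

Lemma potential_da_state (x0 : 'I_n) t :
  \sum_(P : prof) potential P (da_revealed (da_state t P)) <=
    \sum_(P : prof) potential P [ffun=> 0%N].
Proof.
elim: t => [|t IHt].
  by apply: (potential_reveal_all x0 (c := fun _ _ => true)) => // P j; rewrite !ffunE.
apply: le_trans IHt; apply: (potential_reveal_all x0 _ (da_revealedS t)).
move=> P P' agr; have eR := da_state_agree agr.
by split=> [|j]; rewrite eR //; apply/esym/da_rejected_agree.
Qed.

End Potential.

Lemma card_profile_gt0 (n q : nat) : (0 < #|[set: profile n q]|)%N.
Proof. by apply/card_gt0P; exists ([ffun=> 1%g], [ffun=> 1%g]); rewrite inE. Qed.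

Lemma prob_le1 (R : realType) (n q : nat) (E : pred (profile n q)) : prob R E <= 1.
Proof.
rewrite /prob ler_pdivrMr ?ltr0n ?card_profile_gt0 //.
by rewrite mul1r ler_nat subset_leq_card.
Qed.

Lemma prob_subset (R : realType) (n q : nat) (E F : pred (profile n q)) :
  {subset E <= F} -> prob R E <= prob R F.
Proof.
move=> sEF; rewrite /prob ler_wpM2r ?invr_ge0 ?ler0n // ler_nat.
by apply: subset_leq_card; apply/fintype.subsetP => P; rewrite !inE => /sEF.
Qed.

Lemma prob_many_applications_avoiding (R : realType) (n q : nat)
    (I0 : {set 'I_(n * q)}) (S1 : {set 'I_n}) (M : nat) (eps : R) :
  (0 < n)%N -> eps * n%:R <= #|S1|%:R ->
  prob R (fun P : profile n q =>
      (M <= \sum_(i in I0) da_num_applications P i)%N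
      && [forall i in I0, forall s in S1, ~~ da_applies P i s])
  <= (1 - eps) ^+ M.
Proof.
move=> n_gt0 epsS1; pose p : R := 1 - #|S1|%:R / n%:R.
have nR_gt0 : 0 < n%:R :> R by rewrite ltr0n.
have S1_le_n : (#|S1| <= n)%N by have := max_card (mem S1); rewrite card_ord.
have p_ge0 : 0 <= p by rewrite subr_ge0 ler_pdivrMr // mul1r ler_nat.
have p_le1 : p <= 1 by rewrite gerBl divr_ge0.
have pn : p * n%:R = n%:R - #|S1|%:R by rewrite mulrBl mul1r divfK // lt0r_neq0.
have p_le : p <= 1 - eps by rewrite /p lerD2l lerN2 ler_pdivlMr.
apply: le_trans (_ : _ <= p ^+ M) _; first last.
  by rewrite lerXn2r ?nnegrE ?(le_trans p_ge0 p_le).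
rewrite /prob ler_pdivrMr ?ltr0n ?card_profile_gt0 //; set E := [set P | _].
have -> : #|E|%:R = \sum_(P in E) (1 : R) by rewrite sumr_const.
have := potential_da_state I0 M p_ge0 p_le1 nR_gt0 pn (Ordinal n_gt0)
                           (n * (n * q)).+1.
rewrite (eq_bigr _ (fun P _ => potential_zero I0 S1 M p P)) sumr_const cardsT.
rewrite mulr_natr.
apply: le_trans; apply: le_trans (ler_psum_sub _ _) => // [|P].
  by apply: ler_sum => P; rewrite inE => /andP[]; apply: potential_da_rejections_ge1.
exact: potential_ge0.
Qed.

Theorem mainTheorem13 (R : realType) (q : nat) (eps : R)
  (hq : (0 < q)%N) (heps0 : 0 < eps) (heps1 : eps < 1)
  (n : nat) (I0 : {set 'I_(n * q)}) (S1 : {set 'I_n})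
  (hI0 : eps * (n * q)%:R <= #|I0|%:R)
  (hS1 : eps * n%:R <= #|S1|%:R) :
  prob R (fun P : profile n q =>
      (n%:R * Num.sqrt (ln (n%:R : R)) <= (\sum_(i in I0) da_num_applications P i)%:R)
      && [forall i in I0, forall s in S1, ~~ da_applies P i s])
  <= (1 - eps) `^ (n%:R * Num.sqrt (ln (n%:R : R))).
Proof.
set x := n%:R * _.
have [n0 | n_gt0] := posnP n.
  have -> : x = 0 by rewrite /x n0 mul0r.
  by rewrite powRr0 prob_le1.
have x_ge0 : 0 <= x by rewrite mulr_ge0 ?ler0n ?sqrtr_ge0.
pose M := `|Num.ceil x|%N.
have ceilM : (M : int) = Num.ceil x.
  by rewrite /M gez0_abs // ceil_ge0 (lt_le_trans _ x_ge0) // ltrN10.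
have le_M k : x <= k%:R -> (M <= k)%N.
  by move=> x_le; rewrite -lez_nat ceilM ceil_le_int.
have bound := @prob_many_applications_avoiding R n q I0 S1 M eps n_gt0 hS1.
apply: le_trans (_ : _ <= (1 - eps) ^+ M) _.
  apply: le_trans bound; apply: prob_subset => P /andP[/le_M many av].
  by rewrite unfold_in /= many.
rewrite -powR_mulrn ?subr_ge0 ?(ltW heps1) //; apply: ger_powR.
  by rewrite subr_gt0 heps1 gerBl ltW.
by apply: le_trans (ceil_ge x) _; rewrite -ceilM.
Qed.
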